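(* Let $G$ and $H$ be finite simple graphs without isolated vertices and let $g=(V'_0,V'_1,V'_2)$ be a $\gamma_{tR}(G\times H)$-function. Then $\gamma_{tR}(G\times H)\ge |V(G)||V(H)|-(\Delta(H)\Delta(G)-2)|V'_2|$ and $|V'_2|\ge\frac{|V(G)||V(H)|-|V'_1|}{\Delta(H)\Delta(G)}$. Moreover, if in addition $|V(G)||V(H)|=\Delta(H)\Delta(G)|V'_2|+|V'_1|$, then $\gamma_{tR}(G\times H)=|V(G)||V(H)|-(\Delta(H)\Delta(G)-2)|V'_2|$.
   Context: $\Delta(X)$ denotes the maximum degree of a graph $X$. A total Roman dominating function on a graph $X$ without isolated vertices is a map $f:V(X)\to\{0,1,2\}$, written $f=(V_0,V_1,V_2)$ with $V_i=\{v:f(v)=i\}$, such that every vertex of $V_0$ has a neighbor in $V_2$ and the subgraph induced by $V_1\cup V_2$ has no isolated vertices; $\gamma_{tR}(X)$ is the minimum of $\sum_v f(v)$ over such $f$, and a $\gamma_{tR}(X)$-function attains it. The direct product $G\times H$ has vertex set $V(G)\times V(H)$, with $(g,h)(g',h')$ an edge iff $gg'\in E(G)$ and $hh'\in E(H)$. *)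

From HB Require Import structures.
From mathcomp Require Import all_boot all_order all_algebra.
Set Implicit Arguments. Unset Strict Implicit. Unset Printing Implicit Defensive.

Section Graphs.
Variable T : finType.
Implicit Types (e : rel T).

Definition simple_graph e := symmetric e /\ irreflexive e.
Definition no_isolated e := forall x : T, exists y, e x y.

Definition deg e (x : T) : nat := #|[set y | e x y]|.
Definition maxdeg e : nat := \max_(x : T) deg e x.

Definition Vclass (f : {ffun T -> 'I_3}) (i : nat) : {set T} :=
  [set x | nat_of_ord (f x) == i].
Definition weight (f : {ffun T -> 'I_3}) : nat := \sum_(x : T) nat_of_ord (f x).

Definition is_TRDF e (f : {ffun T -> 'I_3}) : bool :=
  [forall v, (nat_of_ord (f v) == 0) ==> [exists u, e v u && (nat_of_ord (f u) == 2)]]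
  && [forall v, (nat_of_ord (f v) != 0) ==> [exists u, e v u && (nat_of_ord (f u) != 0)]].

(* total Roman domination number: minimum weight of a TRDF
   (the initial value 2*|T| is an upper bound, attained by f = 2 whenever
   e has no isolated vertices) *)
Definition gammaTR e : nat :=
  \big[minn/(2 * #|T|)%N]_(f : {ffun T -> 'I_3} | is_TRDF e f) weight f.

Definition is_gammaTR_function e (f : {ffun T -> 'I_3}) : Prop :=
  is_TRDF e f /\ weight f = gammaTR e.
End Graphs.

Definition direct_prod (T1 T2 : finType) (e1 : rel T1) (e2 : rel T2) : rel (T1 * T2) :=
  fun u v => e1 u.1 v.1 && e2 u.2 v.2.

From mathcomp Require Import all_boot all_order all_algebra.
From mathcomp Require Import lra.
Set Implicit Arguments.
Unset Strict Implicit.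
Unset Printing Implicit Defensive.

Import GRing.Theory Num.Theory.
Local Open Scope ring_scope.

(* Every vertex of V_0 has a neighbour in V_2, so V_0 is covered by the
   V_0-neighbourhoods of the vertices of V_2.  A vertex u of V_2 also has a
   neighbour outside V_0, hence at most deg(u) - 1 <= Delta(G)Delta(H) - 1
   neighbours in V_0, since degrees multiply in G x H.  This gives
   |V_0| <= (Delta(G)Delta(H) - 1)|V_2|, and the three claims follow from
   |V| = |V_0| + |V_1| + |V_2| and gamma_tR = |V_1| + 2|V_2|. *)

Lemma leq_card_bigcup (I T : finType) (P : pred I) (F : I -> {set T}) :
  (#|\bigcup_(i | P i) F i| <= \sum_(i | P i) #|F i|)%N.
Proof.
elim/big_ind2: _ => // [|m A n B leAm leBn]; first by rewrite cards0.
exact: leq_trans (leq_card_setU A B) (leq_add leAm leBn).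
Qed.

Lemma leq_deg_maxdeg (T : finType) (e : rel T) (x : T) : (deg e x <= maxdeg e)%N.
Proof. exact: leq_bigmax. Qed.

Section DirectProduct.
Variables (TG TH : finType) (eG : rel TG) (eH : rel TH).

Lemma direct_prod_sym : symmetric eG -> symmetric eH -> symmetric (direct_prod eG eH).
Proof. by move=> symG symH [a b] [c d]; rewrite /direct_prod /= symG symH. Qed.

Lemma deg_direct_prod (a : TG) (b : TH) :
  deg (direct_prod eG eH) (a, b) = (deg eG a * deg eH b)%N.
Proof.
rewrite /deg -cardsX; apply: eq_card => -[c d].
by rewrite !inE.
Qed.

Lemma maxdeg_direct_prod_le :
  (maxdeg (direct_prod eG eH) <= maxdeg eG * maxdeg eH)%N.
Proof.
apply/bigmax_leqP => -[a b] _.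
by rewrite deg_direct_prod leq_mul ?leq_deg_maxdeg.
Qed.

End DirectProduct.

Section ValueClasses.
Variables (T : finType) (f : {ffun T -> 'I_3}).

Lemma sum_Vclass (F : nat -> nat) :
  (\sum_x F (f x) =
     F 0 * #|Vclass f 0| + F 1 * #|Vclass f 1| + F 2 * #|Vclass f 2|)%N.
Proof.
rewrite (partition_big f xpredT) //= !big_ord_recr big_ord0 /= add0n.
have classE (j : 'I_3) : (\sum_(x | f x == j) F (f x) = F j * #|Vclass f j|)%N.
  rewrite (eq_bigr (fun=> F j)) => [|x /eqP -> //].
  by rewrite sum_nat_const mulnC; congr (_ * _)%N; apply: eq_card => x; rewrite inE.
by rewrite !classE.
Qed.

Lemma card_Vclass : #|T| = (#|Vclass f 0| + #|Vclass f 1| + #|Vclass f 2|)%N.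
Proof. by have := sum_Vclass (fun=> 1%N); rewrite !mul1n sum1_card. Qed.

Lemma weightE : weight f = (#|Vclass f 1| + 2 * #|Vclass f 2|)%N.
Proof. by have /= := sum_Vclass id; rewrite mul1n -/(weight f) => ->. Qed.

End ValueClasses.

Section TotalRomanDomination.
Variables (T : finType) (e : rel T) (f : {ffun T -> 'I_3}).
Hypotheses (e_sym : symmetric e) (f_TRDF : is_TRDF e f).

Definition nbhd_V0 (u : T) : {set T} := [set v | e u v & nat_of_ord (f v) == 0%N].

Lemma Vclass0_sub_bigcup_nbhd_V0 :
  Vclass f 0 \subset \bigcup_(u in Vclass f 2) nbhd_V0 u.
Proof.
case/andP: f_TRDF => /forallP dom0 _.
apply/subsetP => v; rewrite inE => fv0.
have /existsP [u /andP [evu fu2]] := implyP (dom0 v) fv0.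
by apply/bigcupP; exists u; rewrite !inE ?fu2 // e_sym evu.
Qed.

Lemma card_nbhd_V0_lt_deg (u : T) :
  nat_of_ord (f u) != 0%N -> (#|nbhd_V0 u| < deg e u)%N.
Proof.
case/andP: f_TRDF => _ /forallP total fu0.
have /existsP [w /andP [euw fw0]] := implyP (total u) fu0.
apply: proper_card; apply/properP; split.
  by apply/subsetP => v; rewrite !inE => /andP [].
by exists w; rewrite !inE ?euw // (negbTE fw0) andbF.
Qed.

Lemma card_Vclass0_le :
  (#|Vclass f 0| + #|Vclass f 2| <= maxdeg e * #|Vclass f 2|)%N.
Proof.
have cover := leq_trans (subset_leq_card Vclass0_sub_bigcup_nbhd_V0) (leq_card_bigcup _ _).
have nbhd_bound u : u \in Vclass f 2 -> (#|nbhd_V0 u| + 1 <= maxdeg e)%N.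
  rewrite inE addn1 => /eqP fu2.
  have fu0 : nat_of_ord (f u) != 0%N by rewrite fu2.
  exact: leq_trans (card_nbhd_V0_lt_deg fu0) (leq_deg_maxdeg e u).
rewrite mulnC -sum_nat_const; apply: leq_trans (leq_add cover (leqnn _)) _.
by rewrite -[#|Vclass f 2|]sum1_card -big_split; apply: leq_sum.
Qed.

End TotalRomanDomination.

Theorem corollary4p2 (TG TH : finType) (eG : rel TG) (eH : rel TH)
  (sG : simple_graph eG) (sH : simple_graph eH)
  (nG : no_isolated eG) (nH : no_isolated eH)
  (g : {ffun (TG * TH)%type -> 'I_3})
  (hg : is_gammaTR_function (direct_prod eG eH) g) :
  let n : rat := (#|TG| * #|TH|)%N%:R in
  let D : rat := (maxdeg eH * maxdeg eG)%N%:R in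
  let v1 : rat := #|Vclass g 1|%:R in
  let v2 : rat := #|Vclass g 2|%:R in
  let gam : rat := (gammaTR (direct_prod eG eH))%:R in
  [/\ gam >= n - (D - 2) * v2,
      v2 >= (n - v1) / D &
      (#|TG| * #|TH| = maxdeg eH * maxdeg eG * #|Vclass g 2| + #|Vclass g 1|)%N ->
        gam = n - (D - 2) * v2].
Proof.
move=> n D v1 v2 gam; case: hg => g_TRDF g_min.
have e_sym := direct_prod_sym (proj1 sG) (proj1 sH).
have V0_le : (#|Vclass g 0| + #|Vclass g 2| <= maxdeg eH * maxdeg eG * #|Vclass g 2|)%N.
  apply: leq_trans (card_Vclass0_le e_sym g_TRDF) _.
  by rewrite [(maxdeg eH * _)%N]mulnC leq_mul2r maxdeg_direct_prod_le orbT.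
set v0 : rat := #|Vclass g 0|%:R.
have nE : n = v0 + v1 + v2 by rewrite /n -card_prod (card_Vclass g) !natrD.
have gamE : gam = v1 + 2 * v2 by rewrite /gam -g_min weightE natrD natrM.
have V0_le_rat : v0 + v2 <= D * v2 by rewrite /D -natrD -natrM ler_nat.
split.
- rewrite gamE nE; lra.
- have [-> | D_neq0] := eqVneq D 0; first by rewrite invr0 mulr0.
  rewrite ler_pdivrMr ?lt0r ?D_neq0 ?ler0n // nE; lra.
- move=> card_eq; have nE' : n = D * v2 + v1 by rewrite /n card_eq natrD natrM.
  rewrite gamE nE'; lra.
Qed.
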